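(* Let $\Sigma=(X,\mathcal{S},\phi)$ be a forward complete dynamical system whose transition map $\phi$ is $\mathcal{S}$-uniformly continuous, and assume there exist $t_1>0$, $G_0>0$ such that $\|\phi(t,x,\sigma)\|\le G_0\|x\|$ for all $t\in[0,t_1]$, $x\in X$, $\sigma\in\mathcal{S}$. Then the following are equivalent: (i) $\Sigma$ is UGES; (ii) there exist a continuous functional $V:X\to\mathbb{R}_+$ and positive reals $p,\underline{c},\overline{c}$ such that $\underline{c}\|x\|^p\le V(x)\le\overline{c}\|x\|^p$ for all $x\in X$ and $\overline{D}_\sigma V(x)\le-\|x\|^p$ for all $x\in X$, $\sigma\in\mathcal{S}$; (iii) there exist a functional $V:X\to\mathbb{R}_+$ and positive reals $p,c$ such that for every $x\in X$ and $\sigma\in\mathcal{S}$ the map $t\mapsto V(\phi(t,x,\sigma))$ is continuous from the left, $\overline{D}_\sigma V(x)\le-\|x\|^p$ for all $x\in X$, $\sigma\in\mathcal{S}$, and $V(x)\le c\|x\|^p$ for all $x\in X$.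
   Context: $(X,\|\cdot\|)$ is a Banach space and $B_X(x,r)$ is the closed ball of center $x$ and radius $r$. Let $\mathcal{Q}$ be a nonempty set and $\mathcal{S}$ a set of functions $\sigma:\mathbb{R}_+\to\mathcal{Q}$ closed by time-shift (for $\sigma\in\mathcal{S}$, $\tau\ge0$, $\mathbb{T}_\tau\sigma:s\mapsto\sigma(\tau+s)$ is in $\mathcal{S}$) and by concatenation (for $\sigma_1,\sigma_2\in\mathcal{S}$, $\tau>0$, the function equal to $\sigma_1$ on $[0,\tau]$ and with $\sigma(\tau+t)=\sigma_2(t)$ for $t>0$ is in $\mathcal{S}$). A triple $\Sigma=(X,\mathcal{S},\phi)$ with $\phi:\mathbb{R}_+\times X\times\mathcal{S}\to X$ is a forward complete dynamical system if: $\phi(0,x,\sigma)=x$; $\phi(t,x,\tilde\sigma)=\phi(t,x,\sigma)$ whenever $\tilde\sigma=\sigma$ on $[0,t]$; $t\mapsto\phi(t,x,\sigma)$ is continuous; $\phi(\tau,\phi(t,x,\sigma),\mathbb{T}_t\sigma)=\phi(t+\tau,x,\sigma)$ for all $t,\tau\ge0$. $\Sigma$ is UGES if there exist $M,\lambda>0$ with $\|\phi(t,x,\sigma)\|\le Me^{-\lambda t}\|x\|$ for all $t\ge0$, $x\in X$, $\sigma\in\mathcal{S}$. The upper Dini derivative is $\overline{D}_\sigma V(x)=\limsup_{h\downarrow0}\frac1h\big(V(\phi(h,x,\sigma))-V(x)\big)$. $\phi$ is $\mathcal{S}$-uniformly continuous if for every $\bar t>0$, $x\in X$, $\varepsilon>0$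 there is $\eta>0$ with $\|\phi(t,x,\sigma)-\phi(t,y,\sigma)\|\le\varepsilon$ for all $t\in[0,\bar t]$, $y\in B_X(x,\eta)$, $\sigma\in\mathcal{S}$. *)

From HB Require Import structures.
From mathcomp Require Import all_boot all_order all_algebra.
From mathcomp Require Import all_classical all_reals all_analysis.
Set Implicit Arguments. Unset Strict Implicit. Unset Printing Implicit Defensive.
Import Order.TTheory GRing.Theory Num.Theory.
Import numFieldNormedType.Exports.
Local Open Scope classical_set_scope.
Local Open Scope ring_scope.

(* Signals are functions R -> Q; only their values on [0, +oo) matter.  Time shift  T_tau sigma : s |-> sigma (tau + s). *)
Definition tshift (R : realType) (Q : Type) (tau : R) (s : R -> Q) : R -> Q :=
  fun t => s (tau + t).

Definition concat (R : realType) (Q : Type) (tau : R) (s1 s2 : R -> Q) : R -> Q :=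
  fun t => if t <= tau then s1 t else s2 (t - tau).

Definition shift_closed (R : realType) (Q : Type) (S : set (R -> Q)) :=
  forall s tau, S s -> 0 <= tau -> S (tshift tau s).

Definition concat_closed (R : realType) (Q : Type) (S : set (R -> Q)) :=
  forall s1 s2 tau, S s1 -> S s2 -> 0 < tau -> S (concat tau s1 s2).

Definition fc_dyn_system (R : realType) (X : normedModType R) (Q : Type)
    (S : set (R -> Q)) (phi : R -> X -> (R -> Q) -> X) : Prop :=
  shift_closed S /\ concat_closed S /\
      (forall x s, S s -> phi 0 x s = x) /\
      (forall t x s s', S s -> S s' -> 0 <= t ->
         (forall r, 0 <= r <= t -> s' r = s r) -> phi t x s' = phi t x s) /\
      (forall x s, S s -> {within `[0, +oo[, continuous (fun t => phi t x s)}) /\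
      (forall t tau x s, S s -> 0 <= t -> 0 <= tau ->
         phi tau (phi t x s) (tshift t s) = phi (t + tau) x s).

Definition UGES (R : realType) (X : normedModType R) (Q : Type)
    (S : set (R -> Q)) (phi : R -> X -> (R -> Q) -> X) : Prop :=
  exists M lam : R, 0 < M /\ 0 < lam /\
    forall t x s, 0 <= t -> S s -> `|phi t x s| <= M * expR (- lam * t) * `|x|.

Definition dini_upper (R : realType) (X : normedModType R) (Q : Type)
    (phi : R -> X -> (R -> Q) -> X) (V : X -> R) (x : X) (s : R -> Q) : \bar R :=
  limf_esup (fun h : R => ((V (phi h x s) - V x) / h)%:E) (0^'+).

Definition S_unif_cont (R : realType) (X : normedModType R) (Q : Type)
    (S : set (R -> Q)) (phi : R -> X -> (R -> Q) -> X) : Prop :=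
  forall (tb : R) (x : X) (eps : R), 0 < tb -> 0 < eps ->
    exists eta : R, 0 < eta /\
      forall t y s, 0 <= t <= tb -> `|y - x| <= eta -> S s ->
        `|phi t x s - phi t y s| <= eps.

From HB Require Import structures.
From mathcomp Require Import all_boot all_order all_algebra.
From mathcomp Require Import all_classical all_reals all_analysis.
From mathcomp Require Import ring lra.
Import Order.TTheory GRing.Theory Num.Theory.
Import numFieldNormedType.Exports.
Local Open Scope classical_set_scope.
Local Open Scope ring_scope.

(* (i) -> (ii): for 0 < mu < lam the functional
     V x = (1 / mu) sup ({|x|} U {e^(mu t) |phi(t, x, s)| : t >= 0, s in S})
   is comparable to |x|; it decays like e^(-mu h) along trajectories, since a
   trajectory issued from phi(h, x, s) is, after concatenating signals, the tail
   of one issued from x; and it is continuous because the part t >= T of the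
   supremum is uniformly small while phi is uniformly continuous on [0, T].
   (ii) -> (iii) only uses the continuity of trajectories.
   (iii) -> (i): within time t1 the norm |phi| shrinks at most by the factor G0,
   so a comparison argument for the Dini derivative gives
     V(phi(t + t1)) <= V(phi(t)) - t1 |phi(t + t1)|^p / G0^p.
   Together with V <= c |x|^p this makes V contract by a fixed factor over each
   window of length t1, and the same inequality turns the geometric decay of V
   back into exponential decay of |phi|^p. *)

Section exp_bounds.
Context {R : realType}.

Lemma expRN_sub1_le (a : R) : 0 <= a -> expR (- a) - 1 <= a * (a - 1).
Proof.
move=> a0; have a1 : 0 < 1 + a by rewrite ltr_pwDl.
have inv_le : expR (- a) <= (1 + a)^-1.
  by rewrite expRN lef_pV2 ?posrE ?expR_gt0 // expR_ge1Dx.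
have inv_ge : 1 - a <= (1 + a)^-1.
  by rewrite -(ler_pM2r a1) mulVf ?gt_eqF //; nra.
have inv_def : (1 + a)^-1 * (1 + a) = 1 by rewrite mulVf ?gt_eqF.
have : 0 <= a * ((1 + a)^-1 - (1 - a)) by rewrite mulr_ge0 // subr_ge0.
lra.
Qed.

Lemma exists_le_expRN (A d eps : R) : 0 <= A -> 0 < d -> 0 < eps ->
  exists2 T, 0 < T & A * expR (- (d * T)) <= eps.
Proof.
move=> A0 d0 e0; exists ((A / eps + 1) / d).
  by rewrite divr_gt0 // ltr_pwDr ?divr_ge0 // ltW.
rewrite [d * _]mulrC divfK ?gt_eqF // expRN ler_pdivrMr ?expR_gt0 //.
apply: le_trans (ler_wpM2l (ltW e0) (expR_ge1Dx _)).
have : eps * (A / eps) = A by rewrite mulrC divfK ?gt_eqF.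
lra.
Qed.

Lemma powR_le_mul (a b g p : R) : 0 <= p -> 0 <= a -> 0 <= b -> 0 <= g ->
  a <= g * b -> a `^ p <= g `^ p * b `^ p.
Proof.
move=> p0 a0 b0 g0 ab; rewrite -powRM //.
by apply: ge0_ler_powR; rewrite ?nnegrE ?mulr_ge0.
Qed.

Lemma exp_decay_of_powR (y y0 K r p t : R) : 0 < p -> 0 <= y -> 0 <= y0 -> 0 <= K ->
  y `^ p <= K * expR (- (r * t)) * y0 `^ p ->
  y <= K `^ p^-1 * expR (- (r / p * t)) * y0.
Proof.
move=> p0 y_ge0 y0_ge0 K0 ypK; rewrite leNgt; apply/negP => Ky.
have K_ge0 : 0 <= K `^ p^-1 * expR (- (r / p * t)) * y0.
  by rewrite !mulr_ge0 ?powR_ge0 ?expR_ge0.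
have := gt0_ltr_powR p0 K_ge0 y_ge0 Ky.
rewrite !powRM ?mulr_ge0 ?powR_ge0 ?expR_ge0 // -powRrM mulVf ?gt_eqF // powRr1 //.
rewrite -expRM (_ : - (r / p * t) * p = - (r * t)) ?ltNge ?ypK //.
by field; rewrite gt_eqF.
Qed.

End exp_bounds.

Section limf_esup_real.
Context {R : realType} (F : set_system R) {FF : Filter F}.

Lemma limf_esup_lt_near (f : R -> R) (b : R) :
  (limf_esup (fun x => (f x)%:E) F < b%:E)%E -> \forall x \near F, f x < b.
Proof.
move=> /ereal_inf_lt[_ [V FV <-]] /= supVb.
apply: filterS FV => x Vx; rewrite -lte_fin.
by apply: le_lt_trans supVb; apply: ereal_sup_ubound; exists x.
Qed.

Lemma limf_esup_le_near (f : R -> R) (a : R) :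
  (forall e, 0 < e -> \forall x \near F, f x <= a + e) ->
  (limf_esup (fun x => (f x)%:E) F <= a%:E)%E.
Proof.
move=> fa; apply/lee_addgt0Pr => e e0.
apply: le_trans (ereal_inf_lbound _) _; first by exists [set x | f x <= a + e]; [exact: fa|].
by apply: ge_ereal_sup => _ [x fx <-]; rewrite -EFinD lee_fin.
Qed.

End limf_esup_real.

Section comparison.
Context {R : realType}.
Implicit Types (a b m : R) (u w : R -> R).

Lemma le_of_right_nonincreasing u a b : a <= b ->
  (forall t, a <= t < b -> \forall h \near 0^'+, u (t + h) <= u t) ->
  (forall t, a < t <= b -> u s @[s --> t^'-] --> u t) ->
  u b <= u a.
Proof.
move=> ab uR uL.
pose A := [set t | a <= t <= b /\ forall s, a <= s <= t -> u s <= u a].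
have Aa : A a by split=> [|s /le_anti ->]; rewrite ?lexx ?ab.
have A0 : A !=set0 by exists a.
have Ab : ubound A b by move=> t [/andP[_ ->]].
pose T := sup A.
have aT : a <= T by apply: ub_le_sup => //; exists b.
have Tb : T <= b by apply: ge_sup.
have below_T s : a <= s < T -> u s <= u a.
  move=> /andP[aS sT]; have [t [_ At] st] := sup_gt A0 sT.
  by apply: At; rewrite aS ltW.
have at_T : u T <= u a.
  have [<-//|aT'] := eqVneq a T.
  have aTlt : a < T by rewrite lt_neqAle aT' aT.
  apply: (closed_cvg (fun x => x <= u a) (@closed_le _ (u a)) _ _ (uL T _));
    last by rewrite aTlt Tb.
  near=> s; apply: below_T; apply/andP; split.
    by near: s; apply: nbhs_left_ge.
  by near: s; apply: nbhs_left_lt.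
suff <- : T = b by [].
apply/eqP; rewrite eq_le Tb leNgt; apply/negP => Tltb.
have /nbhs_ballP[d d0 ud] := uR T ltac:(by rewrite aT Tltb).
pose T' := Num.min (T + d / 2) b.
have TT' : T < T' by rewrite lt_min Tltb andbT ltrDl divr_gt0.
suff : T' <= T by rewrite leNgt TT'.
apply: ub_le_sup; first by exists b.
split=> [|s /andP[aS sT']].
  by rewrite (le_trans aT (ltW TT')) ge_min lexx orbT.
have [sT|Ts] := ltP s T; first by apply: below_T; rewrite aS sT.
apply: le_trans at_T; have [<-//|Tneqs] := eqVneq T s.
have -> : s = T + (s - T) by rewrite addrC subrK.
apply: ud; last by rewrite subr_gt0 lt_neqAle Tneqs Ts.
rewrite /ball /= sub0r normrN ger0_norm ?subr_ge0 //.
move: sT'; rewrite le_min => /andP[sTd _]; lra.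
Unshelve. all: by end_near.
Qed.

Lemma le_sub_slope_of_right_dini w a b m : a <= b ->
  (forall t, a <= t < b -> forall e, 0 < e ->
     \forall h \near 0^'+, (w (t + h) - w t) / h <= - m + e) ->
  (forall t, a < t <= b -> w s @[s --> t^'-] --> w t) ->
  w b <= w a - m * (b - a).
Proof.
move=> ab wR wL.
have slack e : 0 < e -> w b <= w a - (m - e) * (b - a).
  move=> e0; pose u t := w t + (m - e) * (t - a).
  suff : u b <= u a by rewrite /u subrr mulr0 addr0; lra.
  apply: le_of_right_nonincreasing => // t tab.
    near=> h; have h0 : 0 < h by near: h; exact: nbhs_right_gt.
    have : (w (t + h) - w t) / h <= - m + e by near: h; exact: wR.
    rewrite ler_pdivrMr // /u; lra.
  apply: cvgD; first exact: wL.
  apply: cvgM; first exact: cvg_cst.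
  by apply: cvgB; [exact: cvg_at_left_filter cvg_id | exact: cvg_cst].
apply/ler_addgt0Pr => e e0.
have ba1 : 0 < b - a + 1 by lra.
have := slack _ (divr_gt0 e0 ba1).
have : e / (b - a + 1) * (b - a) <= e.
  by rewrite mulrAC ler_pdivrMr // ler_pM2l //; lra.
lra.
Unshelve. all: by end_near.
Qed.

End comparison.

Section exponential_decay.
Context {R : realType}.
Variables (c g t1 : R).
Hypotheses (c_gt0 : 0 < c) (g_gt0 : 0 < g) (t1_gt0 : 0 < t1).

(* [w] contracts by the factor [1 + k = expR (rho * t1)] over each window. *)
Let k := t1 / (c * g).
Let rho := ln (1 + k) / t1.

Let k_gt0 : 0 < k. Proof. by rewrite divr_gt0 // mulr_gt0. Qed.
Let rho_gt0 : 0 < rho. Proof. by rewrite divr_gt0 // ln_gt0 // ltrDl. Qed.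
Let expR_rho_t1 : expR (rho * t1) = 1 + k.
Proof. by rewrite divfK ?gt_eqF // lnK // posrE addr_gt0. Qed.

Section trajectory.
Variables (w z : R -> R).
Hypothesis w_bounds : forall t, 0 <= t -> 0 <= w t <= c * z t.
Hypothesis z_step : forall a u, 0 <= a -> a <= u <= a + t1 -> z u <= g * z a.
Hypothesis w_dissip : forall t, 0 <= t -> w (t + t1) <= w t - t1 / g * z (t + t1).

Let z0_ge0 : 0 <= z 0.
Proof.
have /andP[w0 wz] := w_bounds _ (lexx 0).
by rewrite -(pmulr_rge0 _ c_gt0) (le_trans w0).
Qed.

Let z_le_w t : 0 <= t -> z (t + t1) <= g / t1 * w t.
Proof.
move=> t0; have /andP[w1 _] := w_bounds _ (addr_ge0 t0 (ltW t1_gt0)).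
have zw : t1 / g * z (t + t1) <= w t by have := w_dissip _ t0; lra.
have -> : z (t + t1) = g / t1 * (t1 / g * z (t + t1)) by field; rewrite !gt_eqF.
by rewrite ler_pM2l ?divr_gt0.
Qed.

Let w_contract t : 0 <= t -> expR (rho * t1) * w (t + t1) <= w t.
Proof.
move=> t0; have /andP[_ wz] := w_bounds _ (addr_ge0 t0 (ltW t1_gt0)).
have kw : k * w (t + t1) <= t1 / g * z (t + t1).
  have -> : t1 / g = k * c by rewrite /k; field; rewrite ?gt_eqF.
  by rewrite -mulrA ler_pM2l.
by have := w_dissip _ t0; rewrite expR_rho_t1; lra.
Qed.

Let w_grid n : expR (rho * (n%:R * t1)) * w (n%:R * t1) <= w 0.
Proof.
elim: n => [|n IH]; first by rewrite mul0r mulr0 expR0 mul1r.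
rewrite -natr1 mulrDl mul1r mulrDr expRD -mulrA.
apply: le_trans IH; rewrite ler_pM2l ?expR_gt0 //.
by apply: w_contract; rewrite mulr_ge0 // ltW.
Qed.

Let z_grid n :
  z (n%:R * t1) <= (1 + k^-1) * expR (rho * t1) * expR (- (rho * (n%:R * t1))) * z 0.
Proof.
have gain_ge1 : 1 <= (1 + k^-1) * expR (rho * t1).
  by rewrite expR_rho_t1 mulr_ege1 // lerDl ?invr_ge0 ltW.
case: n => [|n]; first by rewrite mul0r mulr0 oppr0 expR0 mulr1 ler_peMl.
have n0 : 0 <= n%:R * t1 by rewrite mulr_ge0 // ltW.
have /andP[_ w0z] := w_bounds _ (lexx 0).
have wn : w (n%:R * t1) <= expR (- (rho * (n%:R * t1))) * (c * z 0).
  rewrite expRN ler_pdivlMl ?expR_gt0 //; exact: le_trans (w_grid n) w0z.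
have shift : expR (rho * t1) * expR (- (rho * (n.+1%:R * t1))) =
              expR (- (rho * (n%:R * t1))).
  by rewrite -expRD -natr1 mulrDl mul1r; congr expR; ring.
rewrite -(mulrA _ (expR (rho * t1))) shift -mulrA -natr1 mulrDl mul1r.
apply: le_trans (z_le_w _ n0) _.
apply: le_trans (_ : g / t1 * (expR (- (rho * (n%:R * t1))) * (c * z 0)) <= _).
  by rewrite ler_pM2l ?divr_gt0.
have -> : g / t1 * (expR (- (rho * (n%:R * t1))) * (c * z 0)) =
          k^-1 * (expR (- (rho * (n%:R * t1))) * z 0).
  by rewrite /k; field; rewrite !gt_eqF.
by rewrite ler_wpM2r ?mulr_ge0 ?expR_ge0 // lerDr.
Qed.

Lemma exp_decay_of_dissipation t : 0 <= t ->
  z t <= g * (1 + k^-1) * expR (rho * t1) ^+ 2 * expR (- (rho * t)) * z 0.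
Proof.
move=> t0; have /andP[nt tn] := truncn_itv (divr_ge0 t0 (ltW t1_gt0)).
set n := Num.truncn (t / t1) in nt tn.
rewrite ler_pdivlMr // in nt; rewrite ltr_pdivrMr // -natr1 mulrDl mul1r in tn.
have n0 : 0 <= n%:R * t1 by rewrite mulr_ge0 // ltW.
apply: le_trans (z_step _ _ n0 _) _; first by rewrite nt ltW.
apply: le_trans (_ : g * ((1 + k^-1) * expR (rho * t1) * expR (- (rho * (n%:R * t1)))
                     * z 0) <= _).
  by rewrite ler_pM2l // z_grid.
have en : expR (- (rho * (n%:R * t1))) <= expR (rho * t1) * expR (- (rho * t)).
  rewrite -expRD ler_expR; have : 0 < rho * (n%:R * t1 + t1 - t).
    by rewrite mulr_gt0 // subr_gt0.
  lra.
have -> : g * (1 + k^-1) * expR (rho * t1) ^+ 2 * expR (- (rho * t)) * z 0 =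
          g * ((1 + k^-1) * expR (rho * t1) * (expR (rho * t1) * expR (- (rho * t))) * z 0).
  by rewrite expr2; ring.
rewrite ler_pM2l // ler_wpM2r // ler_wpM2l // mulr_ge0 ?expR_ge0 //.
by rewrite addr_ge0 ?invr_ge0 ?ltW.
Qed.

End trajectory.

Lemma exists_exp_decay_of_dissipation : exists K r : R, 0 < K /\ 0 < r /\
  forall w z : R -> R,
    (forall t, 0 <= t -> 0 <= w t <= c * z t) ->
    (forall a u, 0 <= a -> a <= u <= a + t1 -> z u <= g * z a) ->
    (forall t, 0 <= t -> w (t + t1) <= w t - t1 / g * z (t + t1)) ->
    forall t, 0 <= t -> z t <= K * expR (- (r * t)) * z 0.
Proof.
exists (g * (1 + k^-1) * expR (rho * t1) ^+ 2), rho; split; last first.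
  by split=> // w z; exact: exp_decay_of_dissipation.
by rewrite !mulr_gt0 ?exprn_gt0 ?expR_gt0 ?addr_gt0 ?invr_gt0.
Qed.

End exponential_decay.

(* The term [`|x|] keeps the set nonempty when [S] is empty. *)
Definition weighted_orbit {R : realType} {X : normedModType R} {Q : Type}
    (S : set (R -> Q)) (phi : R -> X -> (R -> Q) -> X) (mu : R) (x : X) : set R :=
  [set r | r = `|x| \/ exists t s, [/\ 0 <= t, S s & r = expR (mu * t) * `|phi t x s|]].

Definition orbit_sup {R : realType} {X : normedModType R} {Q : Type}
    (S : set (R -> Q)) (phi : R -> X -> (R -> Q) -> X) (mu : R) (x : X) : R :=
  sup (weighted_orbit S phi mu x).

Section dynamical_system.
Context {R : realType} {X : normedModType R} {Q : Type}.
Context {S : set (R -> Q)} {phi : R -> X -> (R -> Q) -> X}.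
Hypothesis fc : fc_dyn_system S phi.

Let S_shift : shift_closed S. Proof. by case: fc. Qed.
Let S_concat : concat_closed S. Proof. by case: fc => _ []. Qed.
Let phi0 x s : S s -> phi 0 x s = x. Proof. by case: fc => _ [_ [+ _]]; apply. Qed.
Let phi_causal t x s s' : S s -> S s' -> 0 <= t ->
  (forall r, 0 <= r <= t -> s' r = s r) -> phi t x s' = phi t x s.
Proof. by case: fc => _ [_ [_ [+ _]]]; apply. Qed.
Let phi_cont x s : S s -> {within `[0, +oo[, continuous (fun t => phi t x s)}.
Proof. by case: fc => _ [_ [_ [_ [+ _]]]]; apply. Qed.
Let phi_shift t tau x s : S s -> 0 <= t -> 0 <= tau ->
  phi tau (phi t x s) (tshift t s) = phi (t + tau) x s.
Proof. by case: fc => _ [_ [_ [_ [_]]]]; apply. Qed.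

Lemma phi_split u t x s : S s -> 0 <= u <= t ->
  phi t x s = phi (t - u) (phi u x s) (tshift u s).
Proof. by move=> Ss /andP[u0 ut]; rewrite phi_shift ?subr_ge0 // addrC subrK. Qed.

Lemma continuous_along_left (W : X -> R) x s t : continuous W -> S s -> 0 < t ->
  W (phi r x s) @[r --> t^'-] --> W (phi t x s).
Proof.
move=> Wc Ss t0; have /continuous_within_itvcyP[phic _] := phi_cont x _ Ss.
apply: cvg_within_filter; apply: continuous_comp; last exact: Wc.
by apply: phic; rewrite in_itv /= t0.
Qed.

Section uniformly_continuous.
Hypothesis uc : S_unif_cont S phi.

(* [concat] keeps the value of the first signal at the junction, so a shifted
   concatenation agrees with the second signal only at positive times. *)
Lemma eq_phi_signal_gt0 t x s1 s2 : S s1 -> S s2 -> 0 <= t ->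
  (forall r, 0 < r -> s1 r = s2 r) -> phi t x s1 = phi t x s2.
Proof.
move=> S1 S2 t0 s12; have [->|tn0] := eqVneq t 0; first by rewrite !phi0.
have t_gt0 : 0 < t by rewrite lt_def tn0 t0.
apply/eqP; rewrite -subr_eq0 -normr_le0; apply/ler_addgt0Pr => e e0; rewrite add0r.
have [eta [eta0 close]] := uc _ x _ t_gt0 (divr_gt0 e0 (ltr0Sn _ 1)).
have start s : S s -> \forall u \near 0^'+, `|phi u x s - x| <= eta.
  move=> Ss; have /continuous_within_itvcyP[_] := phi_cont x _ Ss.
  by rewrite phi0 // => /cvgr_distC_le; apply.
near (0 : R)^'+ => u.
have u_gt0 : 0 < u by near: u; exact: nbhs_right_gt.
have ut : u <= t by near: u; exact: nbhs_right_le.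
have Ssig : S (tshift u s2) by exact: S_shift (ltW u_gt0).
have tu : 0 <= t - u <= t by rewrite subr_ge0 ut gerBl ltW.
have ut' : 0 <= u <= t by rewrite ltW.
rewrite (phi_split u _ _ _ S1 ut') (phi_split u _ _ _ S2 ut').
rewrite (phi_causal _ _ _ _ Ssig (S_shift _ _ S1 (ltW u_gt0))) ?subr_ge0 //; last first.
  by move=> r /andP[r0 _]; rewrite /tshift s12 // ltr_pwDl.
rewrite (splitr e) (le_trans (ler_distD (phi (t - u) x (tshift u s2)) _ _)) //.
rewrite distrC; apply: lerD; apply: close => //.
  by near: u; exact: start.
by near: u; exact: start.
Unshelve. all: by end_near.
Qed.

Lemma phi_concat h t x s s' : S s -> S s' -> 0 < h -> 0 <= t ->
  phi t (phi h x s) s' = phi (h + t) x (concat h s s').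
Proof.
move=> Ss Ss' h0 t0; have Sc := S_concat _ _ _ Ss Ss' h0.
rewrite -phi_shift ?(ltW h0) // (phi_causal _ _ _ _ Ss Sc) ?(ltW h0) //; last first.
  by move=> r /andP[_ rh]; rewrite /concat rh.
apply: eq_phi_signal_gt0 => //; first exact: S_shift (ltW h0).
by move=> r r0; rewrite /tshift /concat gerDl leNgt r0 /= [h + r]addrC addrK.
Qed.

Section exponentially_stable.
Context {M lam mu : R}.
Hypotheses (M_gt0 : 0 < M) (mu_gt0 : 0 < mu) (mu_lt_lam : mu < lam).
Hypothesis phi_decay :
  forall t x s, 0 <= t -> S s -> `|phi t x s| <= M * expR (- lam * t) * `|x|.

Lemma weighted_norm_le t x s : 0 <= t -> S s ->
  expR (mu * t) * `|phi t x s| <= M * expR (- ((lam - mu) * t)) * `|x|.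
Proof.
move=> t0 Ss; apply: le_trans (ler_wpM2l (expR_ge0 _) (phi_decay _ _ _ t0 Ss)) _.
have -> : - ((lam - mu) * t) = mu * t + - lam * t by ring.
by rewrite expRD !mulrA [_ * M]mulrC.
Qed.

Lemma weighted_orbit_ub x : ubound (weighted_orbit S phi mu x) ((M + 1) * `|x|).
Proof.
move=> _ [->|[t [s [t0 Ss ->]]]]; first by rewrite ler_peMl // lerDr ltW.
apply: le_trans (weighted_norm_le _ _ _ t0 Ss) _; rewrite ler_wpM2r //.
apply: le_trans (_ : M * 1 <= _); last by rewrite mulr1 lerDl.
by rewrite ler_wpM2l ?(ltW M_gt0) // expR_le1 oppr_le0 mulr_ge0 // subr_ge0 ltW.
Qed.

Lemma orbit_sup_ge x r : weighted_orbit S phi mu x r -> r <= orbit_sup S phi mu x.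
Proof.
by move=> xr; apply: ub_le_sup => //; exists ((M + 1) * `|x|); exact: weighted_orbit_ub.
Qed.

Lemma norm_le_orbit_sup x : `|x| <= orbit_sup S phi mu x.
Proof. by apply: orbit_sup_ge; left. Qed.

Lemma orbit_sup_le x : orbit_sup S phi mu x <= (M + 1) * `|x|.
Proof. by apply: ge_sup; [exists `|x|; left | exact: weighted_orbit_ub]. Qed.

Lemma orbit_sup_phi_le h x s : S s -> 0 < h ->
  orbit_sup S phi mu (phi h x s) <= expR (- (mu * h)) * orbit_sup S phi mu x.
Proof.
move=> Ss h0; apply: ge_sup; first by exists `|phi h x s|; left.
move=> _ [->|[t [s' [t0 Ss' ->]]]].
  rewrite -[`|_|]mul1r -(expR0 R) -(addNr (mu * h)) expRD -mulrA ler_pM2l ?expR_gt0 //.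
  by apply: orbit_sup_ge; right; exists h, s; split=> //; exact: ltW.
rewrite phi_concat // (_ : expR (mu * t) = expR (- (mu * h)) * expR (mu * (h + t))).
  rewrite -mulrA ler_pM2l ?expR_gt0 //; apply: orbit_sup_ge; right.
  exists (h + t), (concat h s s'); split=> //; first exact: addr_ge0 (ltW h0) t0.
  exact: S_concat.
by rewrite -expRD; congr expR; ring.
Qed.

Lemma orbit_sup_le_close u v T eps : 0 <= eps ->
  M * expR (- ((lam - mu) * T)) * `|u| <= eps -> `|u| <= `|v| + eps ->
  (forall t s, 0 <= t <= T -> S s -> `|phi t u s - phi t v s| <= eps * expR (- (mu * T))) ->
  orbit_sup S phi mu u <= orbit_sup S phi mu v + eps.
Proof.
move=> e0 tail uv close; apply: ge_sup; first by exists `|u|; left.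
have v_le := norm_le_orbit_sup v.
move=> _ [->|[t [s [t0 Ss ->]]]]; first by apply: le_trans uv _; rewrite lerD2r.
have [tT|Tt] := leP t T.
  have vt : expR (mu * t) * `|phi t v s| <= orbit_sup S phi mu v.
    by apply: orbit_sup_ge; right; exists t, s.
  have uvt : expR (mu * t) * `|phi t u s - phi t v s| <= eps.
    apply: le_trans (ler_wpM2l (expR_ge0 _) (close _ _ _ Ss)) _; first by rewrite t0.
    by rewrite mulrCA -expRD ler_piMr // expR_le1 subr_le0 ler_pM2l.
  have := ler_wpM2l (expR_ge0 (mu * t)) (ler_distD (phi t v s) (phi t u s) 0).
  by rewrite !subr0 mulrDr; lra.
apply: le_trans (_ : eps <= _); last by rewrite lerDr (le_trans (normr_ge0 v)).
apply: le_trans (weighted_norm_le _ _ _ t0 Ss) (le_trans _ tail).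
rewrite ler_wpM2r // ler_wpM2l ?(ltW M_gt0) // ler_expR lerN2.
by rewrite ler_wpM2l ?subr_ge0 ?ltW.
Qed.

Lemma continuous_orbit_sup : continuous (orbit_sup S phi mu).
Proof.
move=> x; apply/cvgrPdist_le => /= eps e0.
have d0 : 0 < lam - mu by rewrite subr_gt0.
have A_ge0 : 0 <= M * (`|x| + 1) by rewrite mulr_ge0 ?addr_ge0 // ltW.
have [T T0 tail] := exists_le_expRN _ _ _ A_ge0 d0 e0.
have [eta [eta0 close]] := uc _ x _ T0 (mulr_gt0 e0 (expR_gt0 (- (mu * T)))).
have tail_u u : `|u| <= `|x| + 1 -> M * expR (- ((lam - mu) * T)) * `|u| <= eps.
  move=> ux; apply: le_trans tail.
  by rewrite [X in _ <= X]mulrAC ler_pM2l ?mulr_gt0 ?expR_gt0.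
apply/nbhs_normP; exists (Num.min (Num.min eta 1) eps) => /= [|y /ltW].
  by rewrite !lt_min eta0 e0 ltr01.
rewrite !le_min => /andP[/andP[xy_eta xy1] xy_eps].
have ny : `|y| <= `|x| + `|x - y|.
  by have := ler_normD x (y - x); rewrite addrCA subrr addr0 distrC.
have nx : `|x| <= `|y| + `|x - y|.
  by have := ler_normD y (x - y); rewrite addrCA subrr addr0.
have yx : orbit_sup S phi mu y <= orbit_sup S phi mu x + eps.
  apply: (orbit_sup_le_close _ _ T) => [||| t s tT Ss]; first exact: ltW.
  - by apply: tail_u; lra.
  - lra.
  - by rewrite distrC; apply: close; rewrite // distrC.
have xy : orbit_sup S phi mu x <= orbit_sup S phi mu y + eps.
  apply: (orbit_sup_le_close _ _ T) => [||| t s tT Ss]; first exact: ltW.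
  - by apply: tail_u; rewrite lerDl.
  - lra.
  - by apply: close; rewrite // distrC.
by rewrite ler_norml; apply/andP; split; lra.
Qed.

Lemma dini_orbit_sup_le x s : S s ->
  (dini_upper phi (fun y => (orbit_sup S phi mu y / mu)%R) x s <= (- `|x|)%:E)%E.
Proof.
move=> Ss; apply: limf_esup_le_near => e e0.
have d0 : 0 < mu * `|x| + 1.
  by rewrite (le_lt_trans (mulr_ge0 (ltW mu_gt0) (normr_ge0 x))) // ltrDl.
near=> h.
have small : h * (mu * `|x| + 1) < e.
  by rewrite -ltr_pdivlMr //; near: h; apply: nbhs_right_lt; rewrite divr_gt0.
have h0 : 0 < h by near: h; exact: nbhs_right_gt.
have a0 : 0 < mu * h by rewrite mulr_gt0.
have dec := orbit_sup_phi_le h x s Ss h0.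
have ax : mu * h * `|x| <= e by lra.
have aax := ler_wpM2r (ltW a0) ax.
have q_ge : (expR (- (mu * h)) - 1) * orbit_sup S phi mu x <=
            (expR (- (mu * h)) - 1) * `|x|.
  by rewrite ler_wnM2l ?norm_le_orbit_sup // subr_le0 expR_le1 oppr_le0 ltW.
have exp_le := ler_wpM2r (normr_ge0 x) (expRN_sub1_le _ (ltW a0)).
rewrite -mulrBl -mulrA -invfM ler_pdivrMr //; lra.
Unshelve. all: by end_near.
Qed.

End exponentially_stable.

End uniformly_continuous.

Section converse.
Context {V : X -> R} {p c t1 G0 : R}.
Hypotheses (p_gt0 : 0 < p) (c_gt0 : 0 < c) (t1_gt0 : 0 < t1) (G0_gt0 : 0 < G0).
Hypothesis V_ge0 : forall x, 0 <= V x.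
Hypothesis V_le : forall x, V x <= c * `|x| `^ p.
Hypothesis V_left_cont : forall x s t, S s -> 0 < t ->
  (fun r => V (phi r x s)) @ t^'- --> V (phi t x s).
Hypothesis V_dini : forall x s, S s ->
  (dini_upper phi V x s <= (- `|x| `^ p)%:E)%E.
Hypothesis phi_bounded : forall t x s, 0 <= t <= t1 -> S s ->
  `|phi t x s| <= G0 * `|x|.

Section trajectory.
Variables (x : X) (s : R -> Q).
Hypothesis Ss : S s.

Lemma norm_phi_le_step a u : 0 <= a -> a <= u <= a + t1 ->
  `|phi u x s| <= G0 * `|phi a x s|.
Proof.
move=> a0 /andP[au ua]; rewrite (phi_split a u x s Ss) ?a0 ?au //.
by apply: phi_bounded; [rewrite subr_ge0 au /=; lra | exact: S_shift].
Qed.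

Lemma trajectory_dini u : 0 <= u -> forall e, 0 < e ->
  \forall h \near 0^'+,
    (V (phi (u + h) x s) - V (phi u x s)) / h <= - `|phi u x s| `^ p + e.
Proof.
move=> u0 e e0; have Ssu := S_shift _ _ Ss u0.
have dini_lt : (dini_upper phi V (phi u x s) (tshift u s) <
                (- `|phi u x s| `^ p + e)%:E)%E.
  by apply: le_lt_trans (V_dini _ _ Ssu) _; rewrite lte_fin ltrDl.
near=> h; rewrite -phi_shift //.
by apply/ltW; near: h; exact: limf_esup_lt_near dini_lt.
Unshelve. all: by end_near.
Qed.

Lemma V_dissipation t : 0 <= t ->
  V (phi (t + t1) x s) <= V (phi t x s) - t1 / G0 `^ p * `|phi (t + t1) x s| `^ p.
Proof.
move=> t0; set m := `|phi (t + t1) x s| `^ p / G0 `^ p.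
have -> : t1 / G0 `^ p * `|phi (t + t1) x s| `^ p = m * (t + t1 - t) by rewrite /m; ring.
apply: (le_sub_slope_of_right_dini (fun r => V (phi r x s))).
- by rewrite lerDl ltW.
- move=> u /andP[tu ut1] e e0; have u0 := le_trans t0 tu.
  apply: filterS (trajectory_dini _ u0 _ e0) => h /le_trans; apply.
  rewrite lerD2r lerN2 ler_pdivrMr ?powR_gt0 // mulrC.
  apply: powR_le_mul; rewrite ?normr_ge0 ?(ltW p_gt0) ?(ltW G0_gt0) //.
  by rewrite norm_phi_le_step // (ltW ut1) lerD2r.
- by move=> u /andP[tu _]; apply: V_left_cont => //; apply: le_lt_trans tu.
Qed.

End trajectory.

Lemma UGES_of_lyapunov : UGES S phi.
Proof.
have [K [r [K_gt0 [r_gt0 decay]]]] :=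
  exists_exp_decay_of_dissipation _ _ _ c_gt0 (powR_gt0 p G0_gt0) t1_gt0.
exists (K `^ p^-1), (r / p); split; first exact: powR_gt0.
split; first exact: divr_gt0.
move=> t x s t0 Ss; rewrite -{2}(phi0 x s Ss) mulNr.
apply: exp_decay_of_powR; rewrite ?normr_ge0 ?(ltW K_gt0) //.
apply: (decay (fun u => V (phi u x s)) (fun u => `|phi u x s| `^ p))
  => // [u u0 | a u a0 au | u u0].
- by rewrite V_ge0 V_le.
- apply: powR_le_mul; rewrite ?normr_ge0 ?(ltW p_gt0) ?(ltW G0_gt0) //.
  exact: norm_phi_le_step.
- exact: V_dissipation.
Qed.

End converse.

End dynamical_system.

Theorem corollary1 (R : realType) (X : completeNormedModType R) (Q : Type)
  (q0 : Q) (S : set (R -> Q)) (phi : R -> X -> (R -> Q) -> X) :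
  fc_dyn_system S phi ->
  S_unif_cont S phi ->
  (exists t1 G0 : R, 0 < t1 /\ 0 < G0 /\
     forall t x s, 0 <= t <= t1 -> S s -> `|phi t x s| <= G0 * `|x|) ->
  [<-> UGES S phi;
       (exists (V : X -> R) (p cl cu : R),
          continuous V /\ (forall x, 0 <= V x) /\ 0 < p /\ 0 < cl /\ 0 < cu /\
              (forall x, cl * `|x| `^ p <= V x /\ V x <= cu * `|x| `^ p) /\
              (forall x s, S s ->
                 (dini_upper phi V x s <= (- `|x| `^ p)%:E)%E));
       (exists (V : X -> R) (p c : R),
          (forall x, 0 <= V x) /\ 0 < p /\ 0 < c /\
              (forall x s t, S s -> 0 < t ->
                 (fun r => V (phi r x s)) @ t^'- --> V (phi t x s)) /\
              (forall x s, S s ->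
                 (dini_upper phi V x s <= (- `|x| `^ p)%:E)%E) /\
              (forall x, V x <= c * `|x| `^ p))].
Proof.
move=> fc uc [t1 [G0 [t1_gt0 [G0_gt0 phi_bounded]]]]; tfae.
- move=> [M [lam [M_gt0 [lam_gt0 phi_decay]]]].
  have mu_gt0 : 0 < lam / 2 by rewrite divr_gt0.
  have mu_lt : lam / 2 < lam by rewrite ltr_pdivrMr // ltr_pMr // ltr1n.
  have V_ge := norm_le_orbit_sup M_gt0 mu_lt phi_decay.
  have V_le := orbit_sup_le M_gt0 mu_lt phi_decay.
  have V_cont := continuous_orbit_sup uc M_gt0 mu_gt0 mu_lt phi_decay.
  have V_dini := dini_orbit_sup_le fc uc M_gt0 mu_gt0 mu_lt phi_decay.
  exists (fun x => orbit_sup S phi (lam / 2) x / (lam / 2)), 1, (lam / 2)^-1,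
    ((M + 1) / (lam / 2)).
  do !split; rewrite ?invr_gt0 ?divr_gt0 ?addr_gt0 //.
  + by move=> x; apply: cvgM; [exact: V_cont | exact: cvg_cst].
  + by move=> x; exact: divr_ge0 (le_trans (normr_ge0 x) (V_ge x)) (ltW mu_gt0).
  + by rewrite powRr1 // mulrC ler_pM2r ?invr_gt0.
  + by rewrite powRr1 // mulrAC ler_pM2r ?invr_gt0.
  + by move=> x s Ss; rewrite powRr1 //; exact: V_dini.
- move=> [V [p [cl [cu [V_cont [V_ge0 [p_gt0 [_ [cu_gt0 [V_bounds V_dini]]]]]]]]]].
  exists V, p, cu; do !split => //; last by move=> x; case: (V_bounds x).
  by move=> x s t Ss t0; exact: (continuous_along_left fc).
- move=> [V [p [c [V_ge0 [p_gt0 [c_gt0 [V_left [V_dini V_le]]]]]]]].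
  exact: (UGES_of_lyapunov fc p_gt0 c_gt0 t1_gt0 G0_gt0 V_ge0 V_le V_left V_dini
    phi_bounded).
Qed.
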